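(* Let $T$ be a block: tetrahedra $\Delta_1,\dots,\Delta_n$ all sharing a common edge $e$ with endpoints $x_1,x_2$, arranged cyclically around $e$, where for $i=1,\dots,n$ the tetrahedra $\Delta_i$ and $\Delta_{i+1}$ (indices mod $n$) are glued along a face $F_i$ containing $e$, and $e$ is not on the boundary. Let $N$ be normal coordinates on $T$ satisfying the matching equations. Build a directed graph $G$ with vertices $u_0,\dots,u_n,w_0,\dots,w_n$, where $u_i$ (resp. $w_i$) represents the normal arcs in $F_i$ crossing $e$ and separating $x_1$ (resp. $x_2$) from the other two vertices of $F_i$ (with $F_0=F_n$, but $u_0\neq u_n$ and $w_0\neq w_n$ as vertices of $G$). For each $i=1,\dots,n$, and each normal disk type in $\Delta_i$ meeting $e$, add one directed edge from the vertex of index $i-1$ corresponding to its arc in $F_{i-1}$ to the vertex of index $i$ corresponding to its arc in $F_i$ (so: triangle at $x_1$ gives $u_{i-1}\to u_i$, triangle at $x_2$ gives $w_{i-1}\to w_i$, and the two quadrilaterals meeting $e$ give $u_{i-1}\to w_i$ and $w_{i-1}\to u_i$), with capacity equal to the corresponding normal coordinate. Let $s_1=u_0$ and $t_1=u_n$. Then $N$ is immersible if and only if the maximum flow in $G$ from $s_1$ to $t_1$ equals the sum of the capacities of the edges leaving $s_1$.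
   Context: In a tetrahedron there are 7 normal disk types: 4 triangles (separating one vertex from the other three) and 3 quadrilaterals (separating two vertices from the other two); normal coordinates give the number of disks of each type in each tetrahedron. For a glued face and a normal arc type in it, the matching equation says the total number of disks (triangle plus quadrilateral) producing that arc on one side equals that on the other side. Placing the prescribed disks in general position (they may intersect), a global gluing is a choice, for each arc type in each glued face, of a bijection between disks on the two sides with that arc type; the glued result is a singular normal surface. $N$ is immersible if some global gluing yields an immersed surface, i.e., one with no branch point; in a block, a branch point occurs exactly when some closed curve formed by the glued normal disks meeting $e$ winds more than once around $e$. A flow from $s$ to $t$ in a directed graph with nonnegative integer capacities is a collection of directed $s$–$t$ paths using each edge $a$ at most $c(a)$ times; a maximum flow maximizes the number of paths. *)

From HB Require Import structures.
From mathcomp Require Import all_boot.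
Set Implicit Arguments. Unset Strict Implicit. Unset Printing Implicit Defensive.

(* Block T: tetrahedra Delta_0, ..., Delta_(n-1) (0-indexed; Delta_j here is  *)
(* the paper's Delta_(j+1)) around the edge e = x1 x2.  Delta_j has vertices  *)
(* x1, x2, p_j ("back" vertex) and q_j ("front" vertex).  Its back face       *)
(* {x1,x2,p_j} and front face {x1,x2,q_j} are the two faces containing e.     *)
(* The front face of Delta_j is glued to the back face of Delta_(j+1 mod n)   *)
(* (x1 -> x1, x2 -> x2, q_j -> p_(j+1)); this glued face is the paper's       *)
(* F_(j+1) (F_n = F_0).  All other faces are boundary faces.                  *)

Inductive dtype :=
| TX1  (* triangle at x1 *)
| TX2  (* triangle at x2 *)
| TP   (* triangle at p_j *)
| TQ   (* triangle at q_j *)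
| QUW  (* quad separating {x1,q_j} from {x2,p_j} *)
| QWU  (* quad separating {x1,p_j} from {x2,q_j} *)
| QE.  (* quad separating {x1,x2} from {p_j,q_j} (does not meet e) *)

Definition dt2n (d : dtype) : nat :=
  match d with TX1 => 0 | TX2 => 1 | TP => 2 | TQ => 3 | QUW => 4 | QWU => 5 | QE => 6 end.
Definition dt_enum := [:: TX1; TX2; TP; TQ; QUW; QWU; QE].
Lemma dt2nK : pcancel dt2n (fun k => nth None (map Some dt_enum) k).
Proof. by case. Qed.
HB.instance Definition _ := Countable.copy dtype (pcan_type dt2nK).
Lemma dt_enumP : Finite.axiom dt_enum. Proof. by case. Qed.
HB.instance Definition _ := isFinite.Build dtype dt_enumP.

(* Normal arc types in a face {x1, x2, c} containing e:
   A1 separates x1, A2 separates x2, AC separates the third vertex c. *)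
Inductive arc := A1 | A2 | AC.
Definition arc2n (a : arc) : nat := match a with A1 => 0 | A2 => 1 | AC => 2 end.
Lemma arc2nK : pcancel arc2n (fun k => nth None [:: Some A1; Some A2; Some AC] k).
Proof. by case. Qed.
HB.instance Definition _ := Countable.copy arc (pcan_type arc2nK).

(* Arc of a disk type in the back face of its tetrahedron (None: disk misses it). *)
Definition back (d : dtype) : option arc :=
  match d with
  | TX1 => Some A1 | TX2 => Some A2 | TP => Some AC | TQ => None
  | QUW => Some A1 | QWU => Some A2 | QE => Some AC end.
Definition front (d : dtype) : option arc :=
  match d with
  | TX1 => Some A1 | TX2 => Some A2 | TP => None | TQ => Some AC
  | QUW => Some A2 | QWU => Some A1 | QE => Some AC end.

Definition meets_e (d : dtype) : bool :=
  match d with TX1 | TX2 | QUW | QWU => true | _ => false end.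

Definition matching (n : nat) (N : 'I_n -> dtype -> nat) : Prop :=
  forall (j : 'I_n) (a : arc),
    \sum_(d : dtype | front d == Some a) N j d
    = \sum_(d : dtype | back d == Some a) N (ordS j) d.

(* Individual normal disks (placed in general position): the k-th disk of
   type d in Delta_j, for k < N j d. *)
Definition disk (n : nat) (N : 'I_n -> dtype -> nat) :=
  {j : 'I_n & {d : dtype & 'I_(N j d)}}.
Arguments disk : clear implicits.
Definition dtet n N (D : disk n N) : 'I_n := projT1 D.
Definition ddt n N (D : disk n N) : dtype := projT1 (projT2 D).

(* A global gluing, encoded as the map sigma sending each disk having an arc
   in the front face of its tetrahedron to the disk it is glued to across that
   face.  The conditions say exactly that for each glued face and each arc
   type a in it, sigma restricts to a bijection between the disks of Delta_j
   with front arc a and the disks of Delta_(j+1) with back arc a.  (The value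
   of sigma on disks with no front arc is irrelevant.) *)
Definition gluing n N (sigma : disk n N -> disk n N) : Prop :=
  [/\ (forall D, front (ddt D) <> None ->
          dtet (sigma D) = ordS (dtet D) /\ back (ddt (sigma D)) = front (ddt D)),
      (forall D D', front (ddt D) <> None -> front (ddt D') <> None ->
          sigma D = sigma D' -> D = D')
    & (forall D', back (ddt D') <> None ->
          exists D, front (ddt D) <> None /\ sigma D = D')].

(* The closed curve through a disk D meeting e is formed by the glued disks
   of its sigma-orbit; its winding number around e is the number of times it
   passes through the tetrahedron of D. *)
Definition winding n N (sigma : disk n N -> disk n N) (D : disk n N) : nat :=
  count (fun D' => dtet D' == dtet D) (orbit sigma D).

(* N is immersible: some global gluing has no branch point, i.e. no closed
   curve of glued disks meeting e winds more than once around e. *)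
Definition immersible n (N : 'I_n -> dtype -> nat) : Prop :=
  exists sigma : disk n N -> disk n N,
    gluing sigma /\ forall D, meets_e (ddt D) -> winding sigma D <= 1.

Fixpoint walk (V : eqType) (E : Type) (src tgt : E -> V) (s : V) (p : seq E) (t : V)
  : bool :=
  match p with
  | [::] => s == t
  | e :: p' => (src e == s) && walk src tgt (tgt e) p' t
  end.

Definition st_path (V : eqType) (E : Type) (src tgt : E -> V) (s t : V) (p : seq E)
  : bool := walk src tgt s p t && uniq (s :: map tgt p).

Definition is_flow (V E : eqType) (src tgt : E -> V) (c : E -> nat) (s t : V)
  (P : seq (seq E)) : Prop :=
  all (st_path src tgt s t) P /\ forall e, \sum_(p <- P) count_mem e p <= c e.

Definition max_flow_eq (V E : eqType) (src tgt : E -> V) (c : E -> nat) (s t : V)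
  (v : nat) : Prop :=
  (exists P, is_flow src tgt c s t P /\ size P = v) /\
  (forall P, is_flow src tgt c s t P -> size P <= v).

(* The graph G of the block.  Vertices: (false, k) = u_k, (true, k) = w_k,  *)
(* k = 0..n.  Edges: one for each tetrahedron Delta_j (paper Delta_(j+1))   *)
(* and each disk type d meeting e, from the index-j vertex of its back arc  *)
(* to the index-(j+1) vertex of its front arc, with capacity N j d.         *)
Definition gvert (n : nat) := (bool * 'I_n.+1)%type.
Definition gedge (n : nat) := {x : ('I_n * dtype)%type | meets_e x.2}.

(* side of an arc crossing e: A1 -> u (false), A2 -> w (true) *)
Definition side (a : option arc) : bool := a == Some A2.

Definition gsrc n (x : gedge n) : gvert n :=
  (side (back (val x).2), widen_ord (leqnSn n) (val x).1).
Definition gtgt n (x : gedge n) : gvert n :=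
  (side (front (val x).2), lift ord0 (val x).1).
Definition gcap n (N : 'I_n -> dtype -> nat) (x : gedge n) : nat :=
  N (val x).1 (val x).2.

From Pilot Require Import Defs.
From HB Require Import structures.
From mathcomp Require Import all_boot zify.
Set Implicit Arguments. Unset Strict Implicit. Unset Printing Implicit Defensive.

(* Think of the disks meeting e as arcs of curves running around e.  In an
   immersed gluing every such curve winds exactly once, i.e. it crosses each
   tetrahedron once; the curves leaving F_0 on the x1-side are then s_1-t_1
   paths of G, and they saturate every edge out of s_1.  Conversely, given a
   saturating flow, the residual capacities are conserved at every vertex by
   the matching equations and vanish at s_1 and t_1, so they split greedily
   into threads from w_0 to w_n.  Paths and threads together label every disk
   meeting e; gluing each disk to the next one on its curve, and the remaining
   disks arbitrarily, gives a gluing in which every curve winds once. *)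

Lemma onth_some (T : eqType) (s : seq T) i : i < size s -> uniq s ->
  exists y, [/\ onth s i = Some y, y \in s & index y s = i].
Proof.
move=> hi us; case E: (onth s i) => [y|]; last by move: (onthTE s i); rewrite E hi.
have hn := onth_nth y y s i E; exists y.
by split => //; rewrite -hn ?mem_nth ?index_uniq.
Qed.

Lemma onth_index (T : eqType) (s : seq T) y : y \in s -> onth s (index y s) = Some y.
Proof.
move=> ys; have hi : index y s < size s by rewrite index_mem.
case E: (onth s (index y s)) => [z|]; last by move: (onthTE s (index y s)); rewrite E hi.
by rewrite -(onth_nth y z _ _ E) nth_index.
Qed.

Lemma count_index_lt (T : eqType) (s : seq T) k : uniq s ->
  count (fun x => index x s < k) s = minn k (size s).
Proof.
elim: s k => [|x s IH] k /=; first by rewrite minn0.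
case/andP => xs us; rewrite eqxx.
rewrite (@eq_in_count _ _ (fun y => index y s < k.-1)); last first.
  move=> y ys; have -> : (x == y) = false by apply/eqP => E; rewrite E ys in xs.
  by case: k.
by rewrite IH //; case: k => [|k] /=; rewrite ?min0n // minnSS add1n.
Qed.

Lemma card_predI_count (T : finType) (A Q : pred T) :
  #|[pred x | A x && Q x]| = count Q (enum A).
Proof.
rewrite cardE /enum_mem size_filter /= count_filter.
by apply: eq_count => x /=; rewrite andbC.
Qed.

Lemma count_nth_iota (T : Type) (x0 : T) (s : seq T) (a : pred T) :
  count a s = count (fun k => a (nth x0 s k)) (iota 0 (size s)).
Proof. by rewrite -{1}(mkseq_nth x0 s) /mkseq count_map. Qed.

Lemma card_ord_nth (T : Type) (x0 : T) (s : seq T) (Q : pred T) :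
  #|[pred i : 'I_(size s) | Q (nth x0 s i)]| = count Q s.
Proof.
rewrite cardE /enum_mem size_filter -enumT (count_nth_iota x0 s) -val_enum_ord.
by rewrite count_map.
Qed.

Lemma count_predI_predD (T : Type) (a b : pred T) s :
  count a s = count (predI a b) s + count (predD a b) s.
Proof. by elim: s => //= x s ->; case: (a x); case: (b x) => /=; lia. Qed.

Lemma sum_nat_of_bool (T : Type) (b : pred T) (s : seq T) :
  \sum_(x <- s) (b x : nat) = count b s.
Proof. by rewrite -sum1_count [RHS]big_mkcond; apply: eq_bigr => x _; case: (b x). Qed.

Lemma count_iota_single m j (b : nat -> bool) : j < m ->
  (forall k, k < m -> k != j -> b k = false) -> count b (iota 0 m) = b j.
Proof.
move=> hj hb; rewrite (@eq_in_count _ _ (fun k => (k == j) && b j)); last first.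
  by move=> k; rewrite mem_iota add0n => hk; case: eqP => [->|/eqP ne] //; rewrite hb.
case: (b j); last by rewrite (@eq_count _ _ pred0) ?count_pred0 // => k; rewrite andbF.
rewrite (@eq_count _ _ (pred1 j)) ?count_uniq_mem ?iota_uniq ?mem_iota ?add0n ?hj //.
by move=> k; rewrite andbT.
Qed.

Lemma count_ge2 (T : eqType) (p : pred T) (s : seq T) x y :
  uniq s -> x \in s -> y \in s -> p x -> p y -> x != y -> 2 <= count p s.
Proof.
move=> us xs ys px py nxy.
apply: (@leq_trans (count (predU (pred1 x) (pred1 y)) s)); last first.
  by apply: sub_count => z /orP [] /eqP ->.
have := count_predUI (pred1 x) (pred1 y) s.
rewrite (@eq_count _ (predI _ _) pred0) ?count_pred0; last first.
  by move=> z /=; case: eqP => // ->; rewrite (negbTE nxy).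
by rewrite addn0 !count_uniq_mem // xs ys => ->.
Qed.

Lemma iter_ordS_val n k (j : 'I_n) : val (iter k (@ordS n) j) = (j + k) %% n.
Proof.
elim: k => [|k IH] /=; first by rewrite addn0 modn_small.
by rewrite /ordS /= IH -addn1 modnDml addn1 addnS.
Qed.

Lemma walk_nth (V : eqType) (E : Type) (src tgt : E -> V) s p t (e : E) :
  walk src tgt s p t ->
  (forall k, k < size p -> src (nth e p k) = nth s (s :: map tgt p) k) /\
  last s (map tgt p) = t.
Proof.
elim: p s => [|x p IH] s /=; first by move=> /eqP ->.
case/andP => /eqP hs /IH [h1 h2]; split => // -[|k] //= hk.
by rewrite h1 // (set_nth_default (tgt x)) //= size_map ltnW.
Qed.

Lemma walk_map_iota (V : eqType) (E : Type) (src tgt : E -> V) (g : nat -> E) t k :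
  forall m s, 0 < k -> src (g m) = s ->
  (forall i, m <= i -> i.+1 < m + k -> tgt (g i) = src (g i.+1)) ->
  tgt (g (m + k).-1) = t -> walk src tgt s (map g (iota m k)) t.
Proof.
elim: k => [|k IH] // m s _ hs hmid hend /=; rewrite hs eqxx /=.
case: k IH hmid hend => [|k] IH hmid hend; first by rewrite /= -hend addn1.
apply: IH => //.
- by rewrite hmid //; lia.
- by move=> i hi hi'; apply: hmid; lia.
- by rewrite -hend; congr (tgt (g _)); lia.
Qed.

Lemma flow_size_le_out_cap (V : eqType) (E : finType) (src tgt : E -> V)
    (c : E -> nat) s t P :
  s != t -> is_flow src tgt c s t P -> size P <= \sum_(x | src x == s) c x.
Proof.
move=> hst [hall hc].
have h p : p \in P -> 1 <= \sum_(x | src x == s) count_mem x p.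
  move=> /(allP hall) /andP [hw _]; case: p hw => [|e p] /=.
    by move/eqP => Est; rewrite Est eqxx in hst.
  by case/andP => /eqP hs _; rewrite (bigD1 e) ?hs ?eqxx.
rewrite -sum1_size big_seq.
apply: (@leq_trans (\sum_(p <- P | p \in P) \sum_(x | src x == s) count_mem x p)).
  exact: leq_sum.
by rewrite -big_seq exchange_big /=; apply: leq_sum => x _; exact: hc.
Qed.

Lemma sum_dtype (F : dtype -> nat) :
  \sum_(d : dtype) F d = F TX1 + F TX2 + F TP + F TQ + F QUW + F QWU + F QE.
Proof.
have E : index_enum dtype = dt_enum by rewrite /index_enum !unlock.
by rewrite unlock E /= !addnA addn0.
Qed.

Definition bside (d : dtype) : bool := side (back d).
Definition fside (d : dtype) : bool := side (front d).

Definition etype (s s' : bool) : dtype :=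
  match s, s' with
  | false, false => TX1 | true, true => TX2 | false, true => QUW | true, false => QWU
  end.

Lemma etype_meets s s' : meets_e (etype s s'). Proof. by case: s; case: s'. Qed.
Lemma bside_etype s s' : bside (etype s s') = s. Proof. by case: s; case: s'. Qed.
Lemma fside_etype s s' : fside (etype s s') = s'. Proof. by case: s; case: s'. Qed.

Lemma etype_sides d : meets_e d -> etype (bside d) (fside d) = d.
Proof. by case: d. Qed.

Lemma eq_meets_e d1 d2 : meets_e d1 -> meets_e d2 ->
  (d1 == d2) = (bside d1 == bside d2) && (fside d1 == fside d2).
Proof. by case: d1; case: d2. Qed.

Lemma back_meets_e d :
  meets_e d -> back d = Some (if bside d then Defs.A2 else Defs.A1).
Proof. by case: d. Qed.

Lemma front_meets_e d :
  meets_e d -> front d = Some (if fside d then Defs.A2 else Defs.A1).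
Proof. by case: d. Qed.

Lemma meets_e_back d : back d <> None -> back d <> Some Defs.AC -> meets_e d.
Proof. by case: d. Qed.

Lemma meets_e_front d : meets_e d -> front d <> None /\ front d <> Some Defs.AC.
Proof. by case: d. Qed.

Lemma meets_e_backAC d : meets_e d -> back d <> Some Defs.AC.
Proof. by case: d. Qed.

Lemma front_Nmeets_e d : ~~ meets_e d -> front d <> None -> front d = Some Defs.AC.
Proof. by case: d. Qed.

Lemma back_Nmeets_e d : ~~ meets_e d -> back d <> None -> back d = Some Defs.AC.
Proof. by case: d. Qed.

Lemma ordS_val n (j : 'I_n) : val (ordS j) = if j.+1 < n then j.+1 else 0.
Proof.
rewrite /ordS /=; case: ifP => h; first by rewrite modn_small.
have -> : j.+1 = n by apply/eqP; rewrite eqn_leq ltn_ord leqNgt h.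
by rewrite modnn.
Qed.

Section Disks.
Variables (n : nat) (N : 'I_n -> dtype -> nat).

Definition dix (D : disk n N) : nat := val (projT2 (projT2 D)).

Lemma disk_ext (D D' : disk n N) :
  dtet D = dtet D' -> ddt D = ddt D' -> dix D = dix D' -> D = D'.
Proof.
case: D => j [d i]; case: D' => j' [d' i']; rewrite /dtet /ddt /dix /= => E1 E2 E3.
by subst j' d'; rewrite (val_inj E3).
Qed.

Lemma dix_lt (D : disk n N) : dix D < N (dtet D) (ddt D).
Proof. by case: D => j [d i]; rewrite /dix /=. Qed.

Lemma card_disk (j : 'I_n) (Q : pred dtype) :
  #|[pred D : disk n N | (dtet D == j) && Q (ddt D)]| = \sum_(d | Q d) N j d.
Proof.
rewrite -sum1_card -(@sig_big_dep _ _ _ _ (fun i => {d : dtype & 'I_(N i d)})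
  (pred1 j) (fun i x => Q (tag x)) (fun _ _ => 1)) /= big_pred1_eq.
transitivity (\sum_(p : {d : dtype & 'I_(N j d)} | Q (tag p) && xpredT (tagged p)) 1).
  by apply: eq_bigl => p; rewrite andbT.
rewrite -(@sig_big_dep _ _ _ _ (fun d => 'I_(N j d)) Q (fun _ _ => true) (fun _ _ => 1)).
by apply: eq_bigr => d _; rewrite sum1_card card_ord.
Qed.

End Disks.

Lemma matching_etype n (N : 'I_n -> dtype -> nat) (j : 'I_n) s' : matching N ->
  N j (etype false s') + N j (etype true s')
  = N (ordS j) (etype s' false) + N (ordS j) (etype s' true).
Proof.
move=> /(_ j (if s' then Defs.A2 else Defs.A1)).
by rewrite big_mkcond [in X in _ = X]big_mkcond !sum_dtype; case: s' => /= h; lia.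
Qed.

Section Graph.
Variables (n : nat) (Hn : 0 < n).

Definition u_first : gvert n := (false, ord0).
Definition u_last : gvert n := (false, ord_max).

Definition gedge0 : gedge n := exist (fun x : 'I_n * dtype => meets_e x.2) (Ordinal Hn, TX1) isT.
Definition gedge_of (j : 'I_n) (d : dtype) : gedge n := insubd gedge0 (j, d).

Lemma gedge_ofE j d : meets_e d -> val (gedge_of j d) = (j, d).
Proof. by move=> h; rewrite /gedge_of insubdK. Qed.

Lemma out_cap_first (N : 'I_n -> dtype -> nat) :
  \sum_(x : gedge n | gsrc x == u_first) gcap N x = N (Ordinal Hn) TX1 + N (Ordinal Hn) QUW.
Proof.
rewrite -(@big_sub_cond _ _ addn _ [pred y : 'I_n * dtype | meets_e y.2]
  (fun y => (side (back y.2), widen_ord (leqnSn n) y.1) == u_first) (fun y => N y.1 y.2)).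
rewrite (eq_bigl (fun y => (y.1 == Ordinal Hn) && (meets_e y.2 && ~~ bside y.2))); last first.
  move=> [j d]; rewrite !inE /= xpair_eqE /bside.
  have -> : (widen_ord (leqnSn n) j == ord0) = (j == Ordinal Hn).
    by apply/eqP/eqP => h; apply/val_inj; move/(congr1 val): h.
  by case: (j == _); case: (meets_e d); case: (side _).
rewrite -(pair_big_dep (pred1 (Ordinal Hn)) (fun _ d => meets_e d && ~~ bside d)
  (fun j d => N j d)) /=.
by rewrite big_pred1_eq big_mkcond sum_dtype /= !addn0 ?add0n.
Qed.

End Graph.

Section CurveGluing.
Variables (n : nat) (N : 'I_n -> dtype -> nat).
Hypothesis Hmatch : matching N.
(* Closed curves around e; curve c crosses the face F_j on side [cside c j]. *)
Variables (C : finType) (cside : C -> nat -> bool).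
Hypothesis cside_period : forall c, cside c n = cside c 0.

Definition curves_of (j : nat) (d : dtype) :=
  [pred c : C | (cside c j == bside d) && (cside c j.+1 == fside d)].

Hypothesis card_curves_of : forall (j : 'I_n) d, meets_e d -> #|curves_of j d| = N j d.

Local Notation disk := (disk n N).

Definition curve_of (D : disk) : option C :=
  onth (enum (curves_of (dtet D) (ddt D))) (dix D).

Definition curve_disk (j : 'I_n) (c : C) (D0 : disk) : disk :=
  let d := etype (cside c j) (cside c j.+1) in
  match @insub _ (fun k => k < N j d) _ (index c (enum (curves_of j d))) with
  | Some i => existT (fun j => {d : dtype & 'I_(N j d)}) j (existT (fun d => 'I_(N j d)) d i)
  | None => D0
  end.

Definition front_AC (j : 'I_n) :=
  [pred D : disk | (dtet D == j) && (front (ddt D) == Some Defs.AC)].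
Definition back_AC (j : 'I_n) :=
  [pred D : disk | (dtet D == j) && (back (ddt D) == Some Defs.AC)].

Definition curve_gluing (D : disk) : disk :=
  if meets_e (ddt D) then
    if curve_of D is Some c then curve_disk (ordS (dtet D)) c D else D
  else nth D (enum (back_AC (ordS (dtet D)))) (index D (enum (front_AC (dtet D)))).

Lemma cside_ordS c (j : 'I_n) : cside c (ordS j) = cside c j.+1.
Proof.
rewrite ordS_val; case: ifP => // h.
by have -> : j.+1 = n by apply/eqP; rewrite eqn_leq ltn_ord leqNgt h.
Qed.

Lemma curve_ofP (D : disk) : meets_e (ddt D) ->
  exists c, [/\ curve_of D = Some c, c \in curves_of (dtet D) (ddt D)
              & index c (enum (curves_of (dtet D) (ddt D))) = dix D].
Proof.
move=> he; have hi : dix D < size (enum (curves_of (dtet D) (ddt D))).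
  by rewrite -cardE card_curves_of // dix_lt.
have [c [h1 h2 h3]] := onth_some hi (enum_uniq _).
by exists c; split => //; rewrite mem_enum in h2.
Qed.

Lemma curve_disk_spec j c D0 :
  [/\ dtet (curve_disk j c D0) = j,
      ddt (curve_disk j c D0) = etype (cside c j) (cside c j.+1)
    & dix (curve_disk j c D0) = index c (enum (curves_of j (etype (cside c j) (cside c j.+1))))].
Proof.
rewrite /curve_disk; set d := etype _ _.
have hin : c \in enum (curves_of j d).
  by rewrite mem_enum inE /d bside_etype fside_etype !eqxx.
have hi : index c (enum (curves_of j d)) < N j d.
  by rewrite -card_curves_of /d ?etype_meets // cardE index_mem.
by rewrite insubT.
Qed.

Lemma curve_disk_meets j c D0 : meets_e (ddt (curve_disk j c D0)).
Proof. by have [_ -> _] := curve_disk_spec j c D0; exact: etype_meets. Qed.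

Lemma curve_disk_default j c D0 D1 : curve_disk j c D0 = curve_disk j c D1.
Proof.
have [a1 a2 a3] := curve_disk_spec j c D0; have [b1 b2 b3] := curve_disk_spec j c D1.
by apply: disk_ext; rewrite ?a1 ?a2 ?a3 ?b1 ?b2 ?b3.
Qed.

Lemma curve_of_disk j c D0 : curve_of (curve_disk j c D0) = Some c.
Proof.
have [a1 a2 a3] := curve_disk_spec j c D0; rewrite /curve_of a1 a2 a3.
by apply: onth_index; rewrite mem_enum inE bside_etype fside_etype !eqxx.
Qed.

Lemma curve_disk_of (D D0 : disk) c : meets_e (ddt D) -> curve_of D = Some c ->
  curve_disk (dtet D) c D0 = D.
Proof.
move=> he hc; have [c' [h1 h2 h3]] := curve_ofP he.
rewrite hc in h1; case: h1 => <- in h2 h3.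
have [a1 a2 a3] := curve_disk_spec (dtet D) c D0.
move: h2; rewrite inE => /andP [/eqP e1 /eqP e2].
have Ed : etype (cside c (dtet D)) (cside c (dtet D).+1) = ddt D by rewrite e1 e2 etype_sides.
by apply: disk_ext; rewrite ?a1 ?a2 ?a3 ?Ed.
Qed.

Lemma curve_gluing_meets (D : disk) : meets_e (ddt D) ->
  exists c, curve_of D = Some c /\ curve_gluing D = curve_disk (ordS (dtet D)) c D.
Proof. by move=> he; have [c [h1 _ _]] := curve_ofP he; exists c; rewrite /curve_gluing he h1. Qed.

Lemma curve_gluingN (D : disk) : ~~ meets_e (ddt D) ->
  curve_gluing D = nth D (enum (back_AC (ordS (dtet D)))) (index D (enum (front_AC (dtet D)))).
Proof. by rewrite /curve_gluing => /negbTE ->. Qed.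

Lemma card_front_AC j : #|front_AC j| = #|back_AC (ordS j)|.
Proof.
rewrite (card_disk N j (fun d => front d == Some Defs.AC)).
by rewrite (card_disk N (ordS j) (fun d => back d == Some Defs.AC)) Hmatch.
Qed.

Lemma index_front_AC_lt (D : disk) j : D \in front_AC j ->
  index D (enum (front_AC j)) < size (enum (back_AC (ordS j))).
Proof. by move=> hD; rewrite -cardE -card_front_AC cardE index_mem mem_enum. Qed.

Lemma front_AC_self (D : disk) : ~~ meets_e (ddt D) -> front (ddt D) <> None ->
  D \in front_AC (dtet D).
Proof. by move=> he hf; rewrite inE eqxx (front_Nmeets_e he hf) eqxx. Qed.

Lemma curve_gluing_face (D : disk) : front (ddt D) <> None ->
  dtet (curve_gluing D) = ordS (dtet D) /\ back (ddt (curve_gluing D)) = front (ddt D).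
Proof.
move=> hf; case he: (meets_e (ddt D)).
  have [c [hc hcD _]] := curve_ofP he.
  have [c' [hc' ->]] := curve_gluing_meets he; rewrite hc in hc'; case: hc' => <-.
  have [a1 a2 _] := curve_disk_spec (ordS (dtet D)) c D.
  split => //; rewrite a2 (back_meets_e (etype_meets _ _)) bside_etype (front_meets_e he).
  by rewrite cside_ordS; move: hcD; rewrite inE => /andP [_ /eqP ->].
have hD := front_AC_self (negbT he) hf.
have := mem_nth D (index_front_AC_lt hD).
rewrite -(curve_gluingN (negbT he)) mem_enum inE => /andP [/eqP -> /eqP ->].
by rewrite (front_Nmeets_e (negbT he) hf).
Qed.

Lemma curve_gluing_meets_e (D : disk) : meets_e (ddt D) -> meets_e (ddt (curve_gluing D)).
Proof. by move=> /curve_gluing_meets [c [_ ->]]; exact: curve_disk_meets. Qed.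

Lemma curve_gluing_inj (D D' : disk) : front (ddt D) <> None -> front (ddt D') <> None ->
  curve_gluing D = curve_gluing D' -> D = D'.
Proof.
move=> hf hf' E; have [t1 b1] := curve_gluing_face hf; have [t2 b2] := curve_gluing_face hf'.
have Ej : dtet D = dtet D' by apply: (can_inj (@ordSK n)); rewrite -t1 -t2 E.
case he: (meets_e (ddt D)); case he': (meets_e (ddt D')).
- have [c [h1 h2]] := curve_gluing_meets he; have [c' [h1' h2']] := curve_gluing_meets he'.
  have : curve_of (curve_gluing D) = curve_of (curve_gluing D') by rewrite E.
  rewrite h2 h2' !curve_of_disk => -[Ec]; subst c'.
  by rewrite -(curve_disk_of D he h1) -(curve_disk_of D' he' h1') Ej (curve_disk_default _ _ _ D').
- move/meets_e_backAC: (curve_gluing_meets_e he); rewrite E b2.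
  by rewrite (front_Nmeets_e (negbT he') hf').
- move/meets_e_backAC: (curve_gluing_meets_e he'); rewrite -E b1.
  by rewrite (front_Nmeets_e (negbT he) hf).
have hD := front_AC_self (negbT he) hf.
have hD' := front_AC_self (negbT he') hf'; rewrite -Ej in hD'.
move: E; rewrite (curve_gluingN (negbT he)) (curve_gluingN (negbT he')) -Ej.
rewrite (set_nth_default D' D (index_front_AC_lt hD)) => /eqP.
rewrite nth_uniq ?enum_uniq ?index_front_AC_lt // => /eqP Ei.
by rewrite -(@nth_index _ D D (enum (front_AC (dtet D)))) ?mem_enum // Ei nth_index ?mem_enum.
Qed.

Lemma curve_gluing_onto (D' : disk) : back (ddt D') <> None ->
  exists D, front (ddt D) <> None /\ curve_gluing D = D'.
Proof.
move=> hb; set j := ord_pred (dtet D').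
have hj : ordS j = dtet D' by rewrite /j ord_predK.
case he': (meets_e (ddt D')).
  have [c [hc _ _]] := curve_ofP he'; exists (curve_disk j c D').
  have heD := curve_disk_meets j c D'.
  split; first by have [] := meets_e_front heD.
  have [c' [hc' ->]] := curve_gluing_meets heD; rewrite curve_of_disk in hc'; case: hc' => <-.
  have [-> _ _] := curve_disk_spec j c D'.
  by rewrite hj (curve_disk_default _ _ _ D') (curve_disk_of D' he' hc).
have hD' : D' \in enum (back_AC (dtet D')).
  by rewrite mem_enum inE eqxx (back_Nmeets_e (negbT he') hb) eqxx.
have hk : index D' (enum (back_AC (dtet D'))) < size (enum (front_AC j)).
  by rewrite -cardE card_front_AC hj cardE index_mem.
set D := nth D' (enum (front_AC j)) (index D' (enum (back_AC (dtet D')))).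
have : D \in front_AC j by rewrite -mem_enum mem_nth.
rewrite inE => /andP [/eqP tD /eqP fD]; exists D; split; first by rewrite fD.
have heD : ~~ meets_e (ddt D) by move: fD; case: (ddt D).
rewrite (curve_gluingN heD) tD hj /D index_uniq ?enum_uniq //.
by rewrite (set_nth_default D' D) ?nth_index // index_mem.
Qed.

Lemma curve_gluingP : gluing curve_gluing.
Proof.
by split; [exact: curve_gluing_face | exact: curve_gluing_inj | exact: curve_gluing_onto].
Qed.

Lemma iter_curve_gluing (D : disk) c k : meets_e (ddt D) -> curve_of D = Some c ->
  iter k curve_gluing D = curve_disk (iter k (@ordS n) (dtet D)) c D.
Proof.
move=> he hc; elim: k => [|k IH] /=; first by rewrite (curve_disk_of D he hc).
set j := iter k (@ordS n) (dtet D); have heD := curve_disk_meets j c D.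
rewrite IH; have [c' [hc' ->]] := curve_gluing_meets heD.
rewrite curve_of_disk in hc'; case: hc' => <-.
by have [-> _ _] := curve_disk_spec j c D; rewrite (curve_disk_default _ _ _ D).
Qed.

(* The orbit of a disk meeting e stays on one curve, which has a single disk
   in each tetrahedron. *)
Lemma winding_curve_gluing (D : disk) : meets_e (ddt D) -> winding curve_gluing D <= 1.
Proof.
move=> he; have [c [hc _ _]] := curve_ofP he.
rewrite /winding (@eq_in_count _ _ (pred1 D)); last first.
  move=> D'; rewrite -fconnect_orbit => /iter_findex.
  rewrite (iter_curve_gluing _ he hc) => hE /=.
  case: eqP => [hT|]; last by case: eqP => // ->.
  apply/esym/eqP; rewrite -hE; set j := iter _ _ _ in hE hT *.
  by have [a1 _ _] := curve_disk_spec j c D; rewrite -hE a1 in hT; rewrite hT curve_disk_of.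
by rewrite count_uniq_mem ?orbit_uniq //; case: (_ \in _).
Qed.

Lemma immersible_of_curves : immersible N.
Proof. by exists curve_gluing; split; [exact: curve_gluingP | exact: winding_curve_gluing]. Qed.

End CurveGluing.

Section Routing.
Variables (K : nat) (res : nat -> bool -> bool -> nat).

(* K threads all start on side [true]; at level j, among the threads on side
   s, those of rank less than res j s true move to side true. *)
Fixpoint route (j : nat) : 'I_K -> bool :=
  if j is j'.+1 then fun l =>
    index l (enum [pred l' | route j' l' == route j' l]) < res j' (route j' l) true
  else fun _ => true.

Definition load (j : nat) (s : bool) : nat :=
  if j is j'.+1 then res j' false s + res j' true s else if s then K else 0.

Variable m : nat.
Hypothesis load_out : forall j s, j < m -> res j s false + res j s true = load j s.

Lemma card_route_step j : (forall s, #|[pred l | route j l == s]| = load j s) -> j < m ->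
  forall s s', #|[pred l | (route j l == s) && (route j.+1 l == s')]| = res j s s'.
Proof.
move=> Hc hj s s'.
have -> : #|[pred l | (route j l == s) && (route j.+1 l == s')]| =
   #|[pred l | (route j l == s) &&
      ((index l (enum [pred l' | route j l' == s]) < res j s true) == s')]|.
  apply: eq_card => l; rewrite !inE /=.
  by case h: (route j l == s) => //=; move/eqP: h => ->.
rewrite card_predI_count; have := Hc s; rewrite -(load_out s hj) cardE.
set A := enum _ => Hs.
have hT : count (fun l => index l A < res j s true) A = res j s true.
  by rewrite count_index_lt ?enum_uniq // Hs; apply/minn_idPl; rewrite leq_addl.
case: s'.
  by rewrite -[RHS]hT; apply: eq_count => l /=; rewrite eqb_id.
rewrite (@eq_count _ _ (predC (fun l => index l A < res j s true))); last first.
  by move=> l /=; rewrite eqbF_neg.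
rewrite -(count_predC (fun l => index l A < res j s true)) hT in Hs.
by apply/eqP; rewrite -(eqn_add2l (res j s true)) Hs addnC.
Qed.

Lemma card_route j : j <= m -> forall s, #|[pred l | route j l == s]| = load j s.
Proof.
elim: j => [|j IH] hj s.
  case: s; last by apply: eq_card0.
  by rewrite -[RHS](card_ord K); apply: eq_card.
rewrite -(cardID [pred l | route j l == false]) /=.
rewrite -(card_route_step (IH (ltnW hj)) hj false s) -(card_route_step (IH (ltnW hj)) hj true s).
congr addn; apply: eq_card => l; rewrite !inE /=; first by rewrite andbC.
by rewrite eqbF_neg negbK eqb_id.
Qed.

Lemma card_route_pair j s s' : j < m ->
  #|[pred l | (route j l == s) && (route j.+1 l == s')]| = res j s s'.
Proof. by move=> hj; apply: card_route_step => //; apply: card_route; exact: ltnW. Qed.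

End Routing.

Section STPaths.
Variables (n : nat) (Hn : 0 < n).

Local Notation st_path := (st_path (@gsrc n) (@gtgt n) (u_first n) (u_last n)).
Local Notation gedge0 := (gedge0 Hn).

Definition path_verts (p : seq (gedge n)) := u_first n :: map (@gtgt n) p.

(* [path_side p k] is the side of e (false: x1, true: x2) at which [p] crosses F_k. *)
Definition path_side (p : seq (gedge n)) (k : nat) : bool := (nth (u_first n) (path_verts p) k).1.

Lemma st_path_layers p : st_path p -> size p = n /\ forall k, k < n ->
  [/\ gsrc (nth gedge0 p k) = nth (u_first n) (path_verts p) k,
      gtgt (nth gedge0 p k) = nth (u_first n) (path_verts p) k.+1
    & val (val (nth gedge0 p k)).1 = k].
Proof.
case/andP => hw _; have [h1 h2] := walk_nth gedge0 hw.
have ht k : k < size p -> gtgt (nth gedge0 p k) = nth (u_first n) (path_verts p) k.+1.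
  by move=> hk; rewrite /path_verts /= (nth_map gedge0).
have hidx k : k <= size p -> val (nth (u_first n) (path_verts p) k).2 = k.
  elim: k => [|k IH] hk //; rewrite -ht //.
  have := IH (ltnW hk); rewrite -[path_verts p]/(u_first n :: _) -h1 // /gsrc /gtgt /= => ->.
  by rewrite /bump add1n.
have hsz : size p = n.
  move: h2; rewrite (last_nth (u_first n)) -/(path_verts p) size_map => E.
  by have := hidx (size p) (leqnn _); rewrite E.
split => // k hk; rewrite -hsz in hk.
by split; [exact: h1 | exact: ht | rewrite -[RHS](hidx k (ltnW hk)) -h1].
Qed.

Lemma path_side_last p : st_path p -> path_side p n = false.
Proof.
move=> hp; have [hsz _] := st_path_layers hp; case/andP: hp => hw _.
have [_] := walk_nth gedge0 hw; rewrite (last_nth (u_first n)) size_map hsz.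
by rewrite /path_side /path_verts => ->.
Qed.

Lemma count_gedge_of p (j : 'I_n) d : st_path p -> meets_e d ->
  count_mem (gedge_of Hn j d) p = (path_side p j == bside d) && (path_side p j.+1 == fside d).
Proof.
move=> hp he; have [hsz hk] := st_path_layers hp.
rewrite (count_nth_iota gedge0) hsz (@count_iota_single n j) //; last first.
  move=> k kn kj; apply/eqP => E; have [_ _] := hk k kn.
  by rewrite E gedge_ofE //= => ej; rewrite ej eqxx in kj.
have [h1 h2 h3] := hk j (ltn_ord j); set x := nth gedge0 p j in h1 h2 h3 *.
rewrite /path_side -h1 -h2 /gsrc /gtgt /= -val_eqE gedge_ofE //.
clearbody x; case: x h1 h2 h3 => [[a b] hb] /= _ _ h3.
have -> : a = j by apply: val_inj.
by rewrite xpair_eqE eqxx /= eq_meets_e.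
Qed.

End STPaths.

Section FlowCurves.
Variables (n : nat) (Hn : 0 < n) (N : 'I_n -> dtype -> nat).
Hypothesis Hmatch : matching N.

Local Notation st_path := (st_path (@gsrc n) (@gtgt n) (u_first n) (u_last n)).

Variable P : seq (seq (gedge n)).
Hypothesis P_flow : is_flow (@gsrc n) (@gtgt n) (gcap N) (u_first n) (u_last n) P.
Hypothesis size_P : size P = \sum_(x : gedge n | gsrc x == u_first n) gcap N x.

Lemma flow_st_path p : p \in P -> st_path p.
Proof. by case: P_flow => /allP h _; apply: h. Qed.

Definition flow_count (j : nat) (s s' : bool) : nat :=
  count (fun p => (path_side p j == s) && (path_side p j.+1 == s')) P.

Lemma flow_count_le (j : 'I_n) s s' : flow_count j s s' <= N j (etype s s').
Proof.
case: P_flow => _ /(_ (gedge_of Hn j (etype s s'))); rewrite /gcap gedge_ofE ?etype_meets //=.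
rewrite (eq_big_seq (fun p => ((path_side p j == s) && (path_side p j.+1 == s') : nat))).
  by rewrite sum_nat_of_bool.
by move=> p /flow_st_path hp; rewrite count_gedge_of ?etype_meets // bside_etype fside_etype.
Qed.

Lemma flow_count_in j s' :
  flow_count j false s' + flow_count j true s' = count (fun p => path_side p j.+1 == s') P.
Proof.
rewrite (count_predI_predD _ (fun p => path_side p j == false)) /flow_count.
by congr addn; apply: eq_count => p /=; case: (path_side p j); rewrite ?andbT ?andbF.
Qed.

Lemma flow_count_out j s :
  flow_count j s false + flow_count j s true = count (fun p => path_side p j == s) P.
Proof.
rewrite (count_predI_predD _ (fun p => path_side p j.+1 == false)) /flow_count.
by congr addn; apply: eq_count => p /=; case: (path_side p j.+1); rewrite ?andbT ?andbF.
Qed.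

Definition Nnat (j : nat) (d : dtype) : nat :=
  if @insub _ (fun k => k < n) _ j is Some o then N o d else 0.

Lemma Nnat_ord j (hj : j < n) d : Nnat j d = N (Ordinal hj) d.
Proof. by rewrite /Nnat insubT. Qed.

Lemma Nnat_val (j : 'I_n) d : Nnat j d = N j d.
Proof. by rewrite /Nnat valK. Qed.

Lemma flow_count_leN j s s' : j < n -> flow_count j s s' <= Nnat j (etype s s').
Proof. by move=> hj; rewrite (Nnat_ord hj); exact: (flow_count_le (Ordinal hj)). Qed.

Lemma size_P_first : size P = Nnat 0 (etype false false) + Nnat 0 (etype false true).
Proof. by rewrite size_P out_cap_first !(Nnat_ord Hn). Qed.

Lemma matching_Nnat j s' : j.+1 < n ->
  Nnat j (etype false s') + Nnat j (etype true s')
  = Nnat j.+1 (etype s' false) + Nnat j.+1 (etype s' true).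
Proof.
move=> hj; have hj' : j < n := ltnW hj.
have := matching_etype (Ordinal hj') s' Hmatch.
have -> : ordS (Ordinal hj') = Ordinal hj by apply: val_inj; rewrite ordS_val /= hj.
by rewrite -!(Nnat_ord hj) -!(Nnat_ord hj').
Qed.

Definition residual (j : nat) (s s' : bool) : nat := Nnat j (etype s s') - flow_count j s s'.

Definition nresidual : nat := residual 0 true false + residual 0 true true.

Lemma residual_out j s : j < n ->
  residual j s false + residual j s true = load nresidual residual j s.
Proof.
case: j => [|j] hj.
  case: s => //=; have h1 := flow_count_leN false false hj.
  have h2 := flow_count_leN false true hj; have := flow_count_out 0 false.
  rewrite (@eq_count _ _ predT) // count_predT size_P_first /residual; lia.
have hj' : j < n := ltnW hj.
have hm := matching_Nnat s hj.
have := flow_count_in j s; have := flow_count_out j.+1 s => e1 e2; rewrite -e2 in e1.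
have := flow_count_leN s false hj; have := flow_count_leN s true hj.
have := flow_count_leN false s hj'; have := flow_count_leN true s hj'.
rewrite /load /residual; lia.
Qed.

(* The matching equations at F_0 make the flow saturate the edges into u_n too. *)
Lemma load_last_false : load nresidual residual n false = 0.
Proof.
case E: n Hn => [|m] // _; have hm : m < n by rewrite E.
have := matching_etype (Ordinal hm) false Hmatch.
have -> : ordS (Ordinal hm) = Ordinal Hn by apply: val_inj; rewrite ordS_val /= -E ltnn.
rewrite -!(Nnat_ord hm) -!(Nnat_ord Hn) => hmt.
have := flow_count_in m false; rewrite -E.
rewrite (@eq_in_count _ _ predT); last by move=> p /flow_st_path /path_side_last ->.
rewrite count_predT size_P_first => e1.
have := flow_count_leN false false hm; have := flow_count_leN true false hm.
rewrite E /load /residual; lia.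
Qed.

Lemma route_last (l : 'I_nresidual) : route residual n l = true.
Proof.
have := card_route residual_out (leqnn n) false; rewrite load_last_false => h.
by move: (card0_eq h l); rewrite !inE; case: (route _ n l).
Qed.

(* The flow paths, together with the residual threads from w_0 to w_n. *)
Definition flow_curve := ('I_(size P) + 'I_nresidual)%type.

Definition flow_curve_side (c : flow_curve) (k : nat) : bool :=
  match c with
  | inl i => path_side (nth [::] P i) k
  | inr l => route residual k l
  end.

Lemma flow_curve_side_period c : flow_curve_side c n = flow_curve_side c 0.
Proof.
case: c => [i|l] /=; last by rewrite route_last.
by rewrite path_side_last //; apply: flow_st_path; exact: mem_nth.
Qed.

Lemma card_flow_curves (j : 'I_n) d : meets_e d -> #|curves_of flow_curve_side j d| = N j d.
Proof.
move=> he; rewrite -sum1_card big_sumType /= !sum1_card.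
have -> : #|[pred i : 'I_(size P) | inl i \in curves_of flow_curve_side j d]|
          = flow_count j (bside d) (fside d).
  by rewrite /flow_count -(card_ord_nth [::]); apply: eq_card.
have -> : #|[pred l : 'I_nresidual | inr l \in curves_of flow_curve_side j d]|
          = residual j (bside d) (fside d).
  by rewrite -(card_route_pair residual_out _ _ (ltn_ord j)); apply: eq_card.
have := flow_count_le j (bside d) (fside d).
by rewrite /residual Nnat_val etype_sides //; lia.
Qed.

Lemma immersible_of_flow : immersible N.
Proof. exact: (immersible_of_curves Hmatch flow_curve_side_period card_flow_curves). Qed.

End FlowCurves.

Section ImmersionFlow.
Variables (n : nat) (Hn : 0 < n) (N : 'I_n -> dtype -> nat).
Variable sigma : disk n N -> disk n N.
Hypothesis sigma_gluing : gluing sigma.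
Hypothesis sigma_winding : forall D, meets_e (ddt D) -> winding sigma D <= 1.

Lemma gluing_meets_e D : meets_e (ddt D) ->
  [/\ meets_e (ddt (sigma D)), dtet (sigma D) = ordS (dtet D)
    & bside (ddt (sigma D)) = fside (ddt D)].
Proof.
move=> he; have [hf hf'] := meets_e_front he.
case: sigma_gluing => /(_ D hf) [h1 h2] _ _.
by split => //; [apply: meets_e_back; rewrite h2 | rewrite /bside /fside h2].
Qed.

Lemma iter_gluing_meets_e k D : meets_e (ddt D) ->
  meets_e (ddt (iter k sigma D)) /\ dtet (iter k sigma D) = iter k (@ordS n) (dtet D).
Proof.
move=> he; elim: k => [|k [IH1 IH2]] //=.
by have [a1 a2 _] := gluing_meets_e IH1; rewrite a2 IH2.
Qed.

Lemma iter_gluing_inj k D D' : meets_e (ddt D) -> meets_e (ddt D') ->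
  iter k sigma D = iter k sigma D' -> D = D'.
Proof.
move=> he he'; elim: k => [|k IH] //= E; apply: IH.
have [h1 _] := iter_gluing_meets_e k he; have [h1' _] := iter_gluing_meets_e k he'.
case: sigma_gluing => _ hinj _; apply: hinj E.
  by have [] := meets_e_front h1.
by have [] := meets_e_front h1'.
Qed.

(* After n steps the curve is back in the tetrahedron of D, so a second
   passage would wind twice. *)
Lemma iter_gluing_period D : meets_e (ddt D) -> iter n sigma D = D.
Proof.
move=> he; apply/eqP/negP => /negP hne.
have [_ ht] := iter_gluing_meets_e n he.
have hv : dtet (iter n sigma D) = dtet D.
  by apply: val_inj; rewrite ht iter_ordS_val modnDr modn_small.
have := sigma_winding he; rewrite /winding.
have := @count_ge2 _ (fun D' => dtet D' == dtet D) (orbit sigma D) D (iter n sigma D)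
  (orbit_uniq _ _).
rewrite -!fconnect_orbit connect0 fconnect_iter hv eqxx eq_sym => /(_ isT isT isT isT hne).
by case: (count _ _) => [|[|]].
Qed.

Definition first_disks :=
  [pred D : disk n N | (dtet D == Ordinal Hn) && (back (ddt D) == Some Defs.A1)].


Lemma first_disks_meets_e D : D \in first_disks -> meets_e (ddt D) /\ bside (ddt D) = false.
Proof. by case/andP => _; case: (ddt D). Qed.

Lemma dtet_iter_first D k : D \in first_disks -> k < n -> val (dtet (iter k sigma D)) = k.
Proof.
move=> hD hk; have [he _] := first_disks_meets_e hD; have [_ ->] := iter_gluing_meets_e k he.
by move: hD; rewrite inE => /andP [/eqP -> _]; rewrite iter_ordS_val add0n modn_small.
Qed.

Definition disk_gedge (D : disk n N) : gedge n := gedge_of Hn (dtet D) (ddt D).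

Definition trace (D : disk n N) : seq (gedge n) :=
  map (fun k => disk_gedge (iter k sigma D)) (iota 0 n).

Lemma trace_walk D : D \in first_disks ->
  walk (@gsrc n) (@gtgt n) (u_first n) (trace D) (u_last n).
Proof.
move=> hD; have [he hsb] := first_disks_meets_e hD.
have hie k : meets_e (ddt (iter k sigma D)) by have [] := iter_gluing_meets_e k he.
apply: walk_map_iota => //.
- rewrite /gsrc gedge_ofE //= -/(bside _) hsb; congr pair; apply: val_inj => /=.
  by move: hD; rewrite inE => /andP [/eqP -> _].
- move=> i _ hi; have hie1 : meets_e (ddt (sigma (iter i sigma D))) := hie i.+1.
  rewrite /gsrc /gtgt !gedge_ofE //=.
  have [_ _ hs] := gluing_meets_e (hie i); rewrite -[side (back _)]/(bside _) hs.
  congr pair; apply: val_inj => /=.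
  rewrite /bump /= add1n -[sigma (iter i sigma D)]/(iter i.+1 sigma D).
  by rewrite !dtet_iter_first //; lia.
- rewrite /gtgt /disk_gedge gedge_ofE // add0n; congr pair.
    have [_ _ hs] := gluing_meets_e (hie n.-1).
    rewrite -[side (front _)]/(fside _) -hs -[sigma _]/(iter n.-1.+1 sigma D).
    by rewrite prednK // iter_gluing_period.
  by apply: val_inj; rewrite /= /bump /= add1n dtet_iter_first ?prednK // prednK.
Qed.

Lemma trace_uniq D : D \in first_disks -> uniq (u_first n :: map (@gtgt n) (trace D)).
Proof.
move=> hD; have [he _] := first_disks_meets_e hD.
apply: (@map_uniq _ _ (fun v : gvert n => val v.2)).
rewrite /= -!map_comp (_ : map _ (iota 0 n) = map succn (iota 0 n)); last first.
  apply/eq_in_map => k; rewrite mem_iota add0n => hk /=.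
  rewrite gedge_ofE /= ?dtet_iter_first //; by have [] := iter_gluing_meets_e k he.
by rewrite (map_inj_uniq succn_inj) iota_uniq andbT; apply/mapP => -[k _].
Qed.

Definition traces : seq (seq (gedge n)) := map trace (enum first_disks).

Lemma count_trace D (j : 'I_n) (e : gedge n) : D \in first_disks -> (val e).1 = j ->
  count_mem e (trace D) = (disk_gedge (iter j sigma D) == e).
Proof.
move=> hD hej; have [he _] := first_disks_meets_e hD.
rewrite /trace count_map (@count_iota_single n j) // => k hk hkj /=.
apply/negbTE/eqP => E; have [hie _] := iter_gluing_meets_e k he.
move: hkj; rewrite -hej -E gedge_ofE //= dtet_iter_first //.
by rewrite eqxx.
Qed.

Lemma traces_cap e : \sum_(p <- traces) count_mem e p <= gcap N e.
Proof.
case: e => [[j d] hd]; set e := exist _ (j, d) hd.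
rewrite big_map (eq_big_seq (fun D => (disk_gedge (iter j sigma D) == e : nat))); last first.
  by move=> D; rewrite mem_enum => hD; rewrite (@count_trace D j e hD erefl).
rewrite sum_nat_of_bool -card_predI_count.
have hinj : {in [pred D | first_disks D && (disk_gedge (iter j sigma D) == e)] &,
              injective (iter j sigma)}.
  move=> D D' /andP [hD _] /andP [hD' _].
  exact: iter_gluing_inj (first_disks_meets_e hD).1 (first_disks_meets_e hD').1.
rewrite -(card_in_image hinj) /gcap /=.
apply: (@leq_trans #|[pred D : disk n N | (dtet D == j) && pred1 d (ddt D)]|); last first.
  by rewrite card_disk big_pred1_eq.
apply: subset_leq_card; apply/subsetP => y /imageP [x /andP [hx /eqP E] ->].
have [he _] := first_disks_meets_e hx; have [hie _] := iter_gluing_meets_e j he.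
by rewrite inE /=; move: (congr1 val E); rewrite gedge_ofE //= => -[-> ->]; rewrite !eqxx.
Qed.

Lemma size_traces : size traces = N (Ordinal Hn) TX1 + N (Ordinal Hn) QUW.
Proof.
rewrite size_map -cardE (card_disk N (Ordinal Hn) (fun d => back d == Some Defs.A1)).
by rewrite big_mkcond sum_dtype /= !addn0 ?add0n.
Qed.

Lemma max_flow_of_immersion :
  max_flow_eq (@gsrc n) (@gtgt n) (gcap N) (u_first n) (u_last n)
    (\sum_(x : gedge n | gsrc x == u_first n) gcap N x).
Proof.
split.
  exists traces; split; last by rewrite size_traces out_cap_first.
  split; last exact: traces_cap.
  by apply/allP => p /mapP [D]; rewrite mem_enum => hD ->; rewrite /st_path trace_walk ?trace_uniq.
move=> P; apply: flow_size_le_out_cap.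
by rewrite xpair_eqE eqxx /= -val_eqE /= eq_sym -lt0n.
Qed.

End ImmersionFlow.

Unset Implicit Arguments.
Theorem lemma13 (n : nat) (Hn : 0 < n) (N : 'I_n -> dtype -> nat)
  (Hmatch : matching N) :
  immersible N <->
  max_flow_eq (@gsrc n) (@gtgt n) (gcap N) (false, ord0) (false, ord_max)
    (\sum_(x : gedge n | gsrc x == (false, ord0)) gcap N x).
Proof.
split.
  by case=> sigma [hglue hwind]; exact (max_flow_of_immersion Hn hglue hwind).
by case=> -[P [hP hsize]] _; exact (immersible_of_flow Hn Hmatch hP hsize).
Qed.
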